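(* Let $F$ be a field of characteristic zero, let $\mathcal{Z}=\langle z\rangle$ be the infinite cyclic group, and let $\mathfrak{S}$ be a Schur ring over $\mathcal{Z}$. If $C\in\mathcal{D}(\mathfrak{S})$ is a primitive set with $z\in C$, then $C=\{z\}$ or $C=\{z,z^{-1}\}$.
   Context: For finite $C\subseteq G$, $\overline{C}=\sum_{g\in C}g\in F[G]$ and $C^*=\{g^{-1}\mid g\in C\}$. A Schur ring over a group $G$ is an $F$-subspace $\mathfrak{S}=\operatorname{Span}_F\{\overline{C}\mid C\in\mathcal{D}(\mathfrak{S})\}$ of $F[G]$ where $\mathcal{D}(\mathfrak{S})$ is a partition of $G$ into finite sets (the primitive sets) such that (i) $\{1\}\in\mathcal{D}(\mathfrak{S})$; (ii) $C\in\mathcal{D}(\mathfrak{S})\Rightarrow C^*\in\mathcal{D}(\mathfrak{S})$; (iii) for all $C,D\in\mathcal{D}(\mathfrak{S})$, $\overline{C}\,\overline{D}=\sum_{E}\lambda_{CDE}\overline{E}$ with finitely many nonzero $\lambda_{CDE}\in F$. *)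

From HB Require Import structures.
From mathcomp Require Import all_boot all_order all_algebra.
From mathcomp Require Import finmap.
Set Implicit Arguments. Unset Strict Implicit. Unset Printing Implicit Defensive.
Import Order.TTheory GRing.Theory Num.Theory.
Local Open Scope fset_scope.
Local Open Scope ring_scope.

(* The infinite cyclic group Z = <z> is modelled as (int, +) with z = 1,
   z^{-1} = -1, z^k = k. *)

Definition finv (C : {fset int}) : {fset int} := [fset - x | x in C].

(* coefficient of g in  C-bar * D-bar  in F[Z] *)
Definition prod_coef (F : nzRingType) (C D : {fset int}) (g : int) : F :=
  (\sum_(c <- C) \sum_(d <- D) nat_of_bool ((c + d)%R == g))%N%:R.

Definition is_partition (D : {fset int} -> Prop) : Prop :=
  (forall C, D C -> C != fset0) /\
  (forall g : int, exists C, D C /\ g \in C) /\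
  (forall C1 C2 (g : int), D C1 -> D C2 -> g \in C1 -> g \in C2 -> C1 = C2).

(* D is the set of primitive sets D(S) of a Schur ring S over Z with
   coefficients in F: conditions (i)-(iii) of the definition. *)
Definition schur_partition (F : nzRingType) (D : {fset int} -> Prop) : Prop :=
  [/\ is_partition D,
      D [fset 0%R],
      (forall C, D C -> D (finv C)) &
      (forall C1 C2, D C1 -> D C2 ->
         exists (Es : seq {fset int}) (lam : {fset int} -> F),
           (forall E, E \in Es -> D E) /\
           forall g : int,
             prod_coef F C1 C2 g = \sum_(E <- Es) lam E *+ (g \in E))].

(* Since char F = 0, the structure constants of the Schur ring are the natural numbers
   #{(x, y) in X * Y | x + y = g}, constant on primitive sets; as the ring contains all
   powers of C-bar, the same holds for the number of ways to write g as a sum of k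
   elements of C.  Maxima of primitive sets are closed under addition, and -x is such a
   maximum iff x is a minimum.  If some primitive set consists of positive integers, its
   minimum q gives the maximum -q, and then every positive maximum x is also a minimum
   (-x = (-q) x + x (q - 1)); so the primitive set of z = 1 is {1}.  Otherwise every
   primitive set other than {0} meets both signs.  With M = max C and m = min C, for
   k >= M - m the only sums of k elements of C with a unique representation are k M and
   k m, so the primitive set of k M is {k M, k m}.  Its square shows that k M + k m is
   alone in its primitive set, forcing m = -M; comparing consecutive levels k M then
   leaves C = {M, -M}, and 1 \in C gives M = 1. *)

From Pilot Require Import Defs.
From HB Require Import structures.
From mathcomp Require Import all_boot all_order all_algebra.
From mathcomp Require Import finmap.
From mathcomp Require Import zify ring.
From Stdlib Require Import ClassicalEpsilon.
Set Implicit Arguments. Unset Strict Implicit. Unset Printing Implicit Defensive.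
Import Order.TTheory GRing.Theory Num.Theory.
Local Open Scope fset_scope.
Local Open Scope ring_scope.

Lemma pchar0_natf_inj (R : idomainType) :
  [pchar R] =i pred0 -> injective (fun n : nat => n%:R : R).
Proof.
move=> /(pcharf0P R) natf_eq0 m n.
wlog le_mn : m n / (m <= n)%N.
  by move=> W eq_mn; case/orP: (leq_total m n) => /W => [->|/(_ (esym eq_mn))].
move=> /= eq_mn; apply/eqP; rewrite eqn_leq le_mn -subn_eq0 -natf_eq0.
by rewrite natrB // eq_mn subrr eqxx.
Qed.

Lemma seq_max d (T : orderType d) (s : seq T) x :
  x \in s -> exists2 M, M \in s & {in s, forall y, (y <= M)%O}.
Proof.
elim: s x => // a s IH x _; case: s IH => [|b s] IH.
  by exists a; rewrite ?mem_head // => y; rewrite inE => /eqP ->.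
have [M Ms leM] := IH b (mem_head _ _).
have [aM|Ma] := leP a M.
  by exists M => [|y /predU1P [->|/leM]] //; rewrite in_cons Ms orbT.
exists a => [|y /predU1P [->|/leM /le_trans]]; rewrite ?mem_head //.
by apply; apply: ltW.
Qed.

Lemma seq_min d (T : orderType d) (s : seq T) x :
  x \in s -> exists2 m, m \in s & {in s, forall y, (m <= y)%O}.
Proof. exact: (@seq_max _ T^d). Qed.

Lemma head_mem (T : eqType) (s : seq T) x y : x \in s -> head y s \in s.
Proof. by case: s => // a s _; exact: mem_head. Qed.

Lemma leq_term_sum_seq (I : eqType) (r : seq I) (F : I -> nat) a :
  a \in r -> (F a <= \sum_(i <- r) F i)%N.
Proof. by move=> ar; rewrite (big_rem a) //= leq_addr. Qed.

Lemma sum_nat_seq_gt1 (I : eqType) (r : seq I) (F : I -> nat) a b :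
  uniq r -> a \in r -> b \in r -> a != b -> (0 < F a)%N -> (0 < F b)%N ->
  (1 < \sum_(i <- r) F i)%N.
Proof.
move=> ur ar br ab Fa Fb; rewrite (big_rem a) //=.
have : b \in rem a r by rewrite (mem_rem_uniq _ ur) inE eq_sym ab.
by move/(leq_term_sum_seq F); move: Fa Fb; lia.
Qed.

Lemma mem_finv (E : {fset int}) g : (g \in Defs.finv E) = (- g \in E).
Proof.
apply/imfsetP/idP => [[x xE ->]|]; first by rewrite opprK.
by exists (- g); rewrite ?opprK.
Qed.

Definition count_sum (X Y : {fset int}) (g : int) : nat :=
  (\sum_(y <- Y) ((g - y)%R \in X))%N.

Definition sumset (X Y : {fset int}) : {fset int} := [fset x + y | x in X, y in Y].

Lemma prod_coefE (R : nzRingType) X Y g : prod_coef R X Y g = (count_sum X Y g)%:R.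
Proof.
congr _%:R; rewrite /count_sum exchange_big; apply: eq_bigr => y _.
rewrite -(count_uniq_mem _ (fset_uniq X)) -sum1_count [RHS]big_mkcond /=.
by apply: eq_bigr => x _; rewrite -(can2_eq (addrK y) (subrK y)).
Qed.

Lemma count_sum_gt0 X Y g : (0 < count_sum X Y g)%N = (g \in sumset X Y).
Proof.
rewrite lt0n sum_nat_seq_neq0; apply/hasP/imfset2P => [[y yY]|[x xX [y yY ->]]].
  by rewrite eqb0 negbK => gyX; exists (g - y) => //; exists y; rewrite ?subrK.
by exists y => //; rewrite addrK xX.
Qed.

(* The coefficient of [g] in [C-bar ^ k]. *)
Fixpoint count_nsum (C : seq int) (k : nat) (g : int) : nat :=
  if k is k'.+1 then (\sum_(c <- C) count_nsum C k' (g - c)%R)%N else (g == 0).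

Fixpoint nsumset (C : seq int) (k : nat) : seq int :=
  if k is k'.+1 then [seq x + c | x <- nsumset C k', c <- C] else [:: 0].

Lemma count_nsumS_gt0 (C : seq int) k g :
  (0 < count_nsum C k.+1 g)%N = has (fun c => 0 < count_nsum C k (g - c))%N C.
Proof. by rewrite lt0n sum_nat_seq_neq0; apply: eq_has => c; rewrite /= lt0n. Qed.

Lemma count_nsum_support (C : seq int) k g : (0 < count_nsum C k g)%N -> g \in nsumset C k.
Proof.
elim: k g => [|k IH] g; first by rewrite /= lt0b => /eqP ->; rewrite mem_head.
rewrite count_nsumS_gt0 => /hasP [c cC /IH gc].
by rewrite -(subrK c g); apply: allpairs_f.
Qed.

Lemma count_nsum_addn_gt0 (C : seq int) k l g h :
  (0 < count_nsum C k g)%N -> (0 < count_nsum C l h)%N ->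
  (0 < count_nsum C (k + l) (g + h))%N.
Proof.
move=> gk; elim: l h => [|l IH] h; first by rewrite /= lt0b addn0 => /eqP ->; rewrite addr0.
rewrite addnS !count_nsumS_gt0 => /hasP [c cC hc]; apply/hasP; exists c => //.
by rewrite -addrA IH.
Qed.

Lemma count_nsum_mulrn_gt0 (C : seq int) c k :
  c \in C -> (0 < count_nsum C k (c *+ k))%N.
Proof.
move=> cC; elim: k => [|k IH]; first by rewrite mulr0n.
have c1 : (0 < count_nsum C 1 c)%N.
  by rewrite count_nsumS_gt0; apply/hasP; exists c; rewrite ?subrr.
by rewrite mulrSr -[k.+1]addn1; apply: count_nsum_addn_gt0.
Qed.

Lemma count_nsum_le (C : seq int) M k g :
  {in C, forall c, c <= M} -> (0 < count_nsum C k g)%N -> g <= M *+ k.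
Proof.
move=> leM; elim: k g => [|k IH] g; first by rewrite /= lt0b => /eqP ->.
rewrite count_nsumS_gt0 => /hasP [c cC /IH]; have := leM c cC; rewrite mulrSr; lia.
Qed.

Lemma count_nsum_max (C : seq int) M k : uniq C -> M \in C -> {in C, forall c, c <= M} ->
  count_nsum C k (M *+ k) = 1%N.
Proof.
move=> uC MC leM; elim: k => [|k IH] //=.
rewrite (big_rem M) //= mulrSr addrK IH big1_seq ?addn0 // => c /andP [_ cM].
apply/eqP; rewrite -leqn0 leqNgt; apply/negP => /(count_nsum_le leM).
have : c != M by move: cM; rewrite (mem_rem_uniq _ uC) inE => /andP [].
have := leM c (mem_rem cM); lia.
Qed.

Lemma count_nsum_eq1 (C : seq int) k g : uniq C -> count_nsum C k.+1 g = 1%N ->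
  exists2 c, c \in C & g = c *+ k.+1.
Proof.
move=> uC; elim: k g => [|k IH] g g1.
  have /hasP [c cC] : has (fun c => 0 < count_nsum C 0 (g - c))%N C.
    by rewrite -count_nsumS_gt0 g1.
  by rewrite lt0b subr_eq0 => /eqP ->; exists c.
have /hasP [c0 c0C pos0] : has (fun c => 0 < count_nsum C k.+1 (g - c))%N C.
  by rewrite -count_nsumS_gt0 g1.
have le1 : (count_nsum C k.+1 (g - c0) <= 1)%N.
  by rewrite -g1 (leq_term_sum_seq (fun c => count_nsum C k.+1 (g - c))).
have [c1 c1C eq1] : exists2 c1, c1 \in C & g - c0 = c1 *+ k.+1.
  by apply: IH; apply/eqP; rewrite eqn_leq le1 pos0.
exists c0 => //; have [c10|ne] := eqVneq c1 c0.
  by rewrite mulrSr -{1}c10 -eq1 subrK.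
have pos1 : (0 < count_nsum C k.+1 (g - c1))%N.
  have -> : g - c1 = c0 + c1 *+ k by move: eq1; rewrite mulrSr; lia.
  by rewrite -[k.+1]add1n; apply: count_nsum_addn_gt0; apply: count_nsum_mulrn_gt0.
have := sum_nat_seq_gt1 (F := fun c => count_nsum C k.+1 (g - c)) uC c0C c1C.
by rewrite -[X in (1 < X)%N]/(count_nsum C k.+2 g) g1 eq_sym ne pos0 pos1 => /(_ isT isT isT).
Qed.

Lemma count_nsum_interior (C : seq int) m M c k : uniq C -> m \in C -> M \in C -> c \in C ->
  m < c < M -> M - m <= k.+1%:Z -> (1 < count_nsum C k.+1 (c *+ k.+1))%N.
Proof.
move=> uC mC MC cC /andP [mc cM] le_k.
apply: (sum_nat_seq_gt1 uC cC MC); first by rewrite lt_eqF.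
  by rewrite mulrSr addrK count_nsum_mulrn_gt0.
change (0 < count_nsum C k (c *+ k.+1 - M))%N.
(* A representation starting with [M] instead of [c]: [c (k + 1) - M = a M + b m + d c]. *)
have [a ha] : exists a : nat, a%:Z = c - m - 1 by exists (absz (c - m - 1)%R); lia.
have [b hb] : exists b : nat, b%:Z = M - c by exists (absz (M - c)%R); lia.
have [d hd] : exists d : nat, d%:Z = k.+1%:Z - (M - m).
  by exists (absz (k.+1%:Z - (M - m))%R); lia.
have -> : c *+ k.+1 - M = M *+ a + m *+ b + c *+ d.
  by rewrite !pmulrn !mulrzz ha hb hd; ring.
have -> : k = (a + b + d)%N by lia.
by apply: count_nsum_addn_gt0; first apply: count_nsum_addn_gt0;
  apply: count_nsum_mulrn_gt0.
Qed.

Lemma count_nsum_eq1_extremal (C : seq int) m M k g : uniq C -> m \in C -> M \in C ->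
  {in C, forall c, m <= c} -> {in C, forall c, c <= M} -> M - m <= k.+1%:Z ->
  count_nsum C k.+1 g = 1%N -> g = M *+ k.+1 \/ g = m *+ k.+1.
Proof.
move=> uC mC MC lem leM le_k g1; have [c cC gE] := count_nsum_eq1 uC g1; subst g.
have [->|cM] := eqVneq c M; first by left.
have [->|cm] := eqVneq c m; first by right.
have : ~~ (m < c < M).
  by apply/negP => /(count_nsum_interior uC mC MC cC)/(_ le_k); rewrite g1.
by have := lem c cC; have := leM c cC; move: cM cm; lia.
Qed.

Section SchurPartition.

Variables (F : fieldType) (D : {fset int} -> Prop).
Hypotheses (charF0 : [pchar F] =i pred0) (HS : schur_partition F D).

Lemma schur_cover g : exists E, D E /\ g \in E.
Proof. by case: HS => [[_ []]]. Qed.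

Definition block (g : int) : {fset int} :=
  proj1_sig (constructive_indefinite_description _ (schur_cover g)).

Lemma D_block g : D (block g).
Proof. by rewrite /block; case: constructive_indefinite_description => E []. Qed.

Lemma mem_block g : g \in block g.
Proof. by rewrite /block; case: constructive_indefinite_description => E []. Qed.

Lemma blockE E g : D E -> g \in E -> E = block g.
Proof.
by case: HS => [[_ [_ Duniq]]] _ _ _ DE gE; exact: Duniq (D_block g) gE (mem_block g).
Qed.

Lemma block_mem g h : h \in block g -> block h = block g.
Proof. by move=> hg; rewrite -(blockE (D_block g) hg). Qed.

Lemma mem_same_block E g h : D E -> h \in block g -> (h \in E) = (g \in E).
Proof.
move=> DE hg; apply/idP/idP => [/(blockE DE)->|/(blockE DE)->//].
by rewrite (block_mem hg) mem_block.
Qed.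

Lemma block0 : block 0 = [fset 0].
Proof. by case: HS => _ D0 _ _; rewrite -(blockE D0 (fset11 0)). Qed.

Lemma block_opp g : block (- g) = Defs.finv (block g).
Proof.
case: HS => _ _ Dinv _; apply/esym/blockE; first exact/Dinv/D_block.
by rewrite mem_finv opprK mem_block.
Qed.

Definition block_constant (phi : int -> nat) := forall g h, h \in block g -> phi h = phi g.

Lemma count_sum_block_constant X Y : D X -> D Y -> block_constant (count_sum X Y).
Proof.
case: HS => _ _ _ Dmul DX DY g h hg; have [Es [lam [DEs coefE]]] := Dmul X Y DX DY.
apply: (pchar0_natf_inj charF0); rewrite /= -!prod_coefE !coefE.
by apply: eq_big_seq => E /DEs DE; rewrite (mem_same_block DE hg).
Qed.

Lemma sumset_block X Y g : D X -> D Y -> g \in sumset X Y -> {subset block g <= sumset X Y}.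
Proof.
move=> DX DY gXY h hg.
by rewrite -count_sum_gt0 (count_sum_block_constant DX DY hg) count_sum_gt0.
Qed.

Lemma block_constant_conv (C : {fset int}) (phi : int -> nat) (S : seq int) :
  D C -> (forall x, x \notin S -> phi x = 0%N) -> block_constant phi ->
  block_constant (fun g => \sum_(c <- C) phi (g - c)%R)%N.
Proof.
(* Decompose [phi] along the blocks meeting [S]: the convolution becomes a combination
   of the block-constant functions [count_sum E C]. *)
move=> DC phi0 phiB; pose Bs := undup [seq block s | s <- S].
have DBs E : E \in Bs -> D E by rewrite mem_undup => /mapP [s _ ->]; exact: D_block.
pose v E := phi (head 0 E).
have v_block x : v (block x) = phi x by rewrite /v (phiB x) // (head_mem _ (mem_block x)).
have phiE x : phi x = (\sum_(E <- Bs) v E * (x \in E))%N.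
  have [xS|xS] := boolP (x \in S).
    rewrite (bigD1_seq (block x)) ?undup_uniq ?mem_undup ?map_f //= mem_block muln1.
    rewrite v_block big1_seq ?addn0 // => E /andP [Ex /DBs DE].
    have [/(blockE DE) EX|_] := boolP (x \in E); last by rewrite muln0.
    by rewrite EX eqxx in Ex.
  rewrite phi0 // big1_seq // => E /andP [_ /DBs DE].
  have [/(blockE DE) ->|_] := boolP (x \in E); last by rewrite muln0.
  by rewrite v_block phi0.
have convE g : (\sum_(c <- C) phi (g - c)%R = \sum_(E <- Bs) v E * count_sum E C g)%N.
  rewrite (eq_bigr _ (fun c _ => phiE (g - c))) exchange_big /=.
  by apply: eq_bigr => E _; rewrite /count_sum big_distrr.
move=> g h hg; rewrite !convE; apply: eq_big_seq => E /DBs DE.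
by rewrite (count_sum_block_constant DE DC hg).
Qed.

Lemma count_nsum_block_constant (C : {fset int}) k : D C -> block_constant (count_nsum C k).
Proof.
move=> DC; elim: k => [|k IH]; last first.
  have supp x : x \notin nsumset C k -> count_nsum C k x = 0%N.
    by move=> xS; apply/eqP; rewrite -leqn0 leqNgt; apply: contra xS => /count_nsum_support.
  exact: (block_constant_conv DC supp IH).
move=> g h hg /=; have [g0|g0] := eqVneq g 0.
  by move: hg; rewrite g0 block0 in_fset1 => ->.
suff /negbTE -> : h != 0 by [].
apply: contra g0 => /eqP h0.
by move: (mem_block g); rewrite -(block_mem hg) h0 block0 in_fset1.
Qed.

Definition block_max x := {in block x, forall g, g <= x}.
Definition block_min x := {in block x, forall g, x <= g}.

Lemma block_maxN x : block_max (- x) <-> block_min x.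
Proof.
rewrite /block_max /block_min block_opp; split=> H g.
  by move=> gx; have := H (- g); rewrite mem_finv opprK => /(_ gx); rewrite lerN2.
by rewrite mem_finv => /H; rewrite lerNr.
Qed.

Lemma block_max0 : block_max 0.
Proof. by move=> g; rewrite block0 in_fset1 => /eqP ->. Qed.

Lemma block_maxD x y : block_max x -> block_max y -> block_max (x + y).
Proof.
move=> Mx My g /(sumset_block (D_block x) (D_block y)) sub.
have /sub /imfset2P [a ax [b bY ->]] : x + y \in sumset (block x) (block y).
  by apply: in_imfset2; apply: mem_block.
exact: lerD (Mx a ax) (My b bY).
Qed.

Lemma block_maxMn x k : block_max x -> block_max (x *+ k).
Proof.
move=> Mx; elim: k => [|k IH]; first exact: block_max0.
by rewrite mulrSr; apply: block_maxD.
Qed.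

Definition positive_block := exists x, {in block x, forall g, 0 < g}.

Lemma positive_blockN x : {in block x, forall g, g < 0} -> positive_block.
Proof.
by move=> neg; exists (- x) => g; rewrite block_opp mem_finv => /neg; rewrite oppr_lt0.
Qed.

Lemma positive_block_max_min x : positive_block -> 0 <= x -> block_max x -> block_min x.
Proof.
move=> [y pos_y] x_ge0 Mx; have [q qy minq] := seq_min (mem_block y).
have Mq : block_max (- q) by apply/block_maxN; rewrite /block_min (block_mem qy).
have [n xn] : exists n : nat, x = n%:Z by exists (absz x); lia.
subst x.
have [p qE] : exists p : nat, q = p.+1%:Z by exists (absz q).-1; have := pos_y q qy; lia.
apply/block_maxN; have -> : - n%:Z = (- q) *+ n + n%:Z *+ p.
  by rewrite qE !pmulrn !mulrzz -addn1 PoszD; ring.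
by apply: block_maxD; apply: block_maxMn.
Qed.

Lemma positive_block_singleton E x :
  positive_block -> D E -> x \in E -> 0 <= x -> E = [fset x].
Proof.
move=> pos DE xE x_ge0; have [M ME maxM] := seq_max xE.
have EM := blockE DE ME.
have Mmax : block_max M by rewrite /block_max -EM.
have Mmin := positive_block_max_min pos (le_trans x_ge0 (maxM x xE)) Mmax.
have eqM g : g \in E -> g = M.
  by move=> gE; apply/eqP; rewrite eq_le maxM //= Mmin // -EM.
apply/fsetP => g; rewrite in_fset1; apply/idP/eqP => [gE|->//].
by rewrite (eqM g gE) (eqM x xE).
Qed.

Section NoPositiveBlock.

Variables (C : {fset int}) (M m : int).
Hypotheses (DC : D C) (MC : M \in C) (mC : m \in C).
Hypotheses (leM : {in C, forall c, c <= M}) (lem : {in C, forall c, m <= c}).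
Hypotheses (M_gt0 : 0 < M) (no_pos : ~ positive_block).

Lemma min_lt0 : m < 0.
Proof.
rewrite ltNge; apply/negP => m_ge0; apply: no_pos; exists M => g.
rewrite -(blockE DC MC) => gC; have g_neq0 : g != 0.
  by apply: contraTneq MC => g0; rewrite (blockE DC gC) g0 block0 in_fset1 gt_eqF.
by have := lem gC; move: g_neq0; lia.
Qed.

Lemma block_level k : (`|M - m| <= k)%N -> block (M *+ k) = [fset M *+ k; m *+ k].
Proof.
have m_lt0 := min_lt0; case: k => [|k] le_k; first lia.
have level g : g \in block (M *+ k.+1) -> g = M *+ k.+1 \/ g = m *+ k.+1.
  move=> gb; apply: (count_nsum_eq1_extremal (fset_uniq C) mC MC lem leM); first lia.
  by rewrite (count_nsum_block_constant k.+1 DC gb) count_nsum_max ?fset_uniq.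
have mb : m *+ k.+1 \in block (M *+ k.+1).
  apply: contraT => mb; case: no_pos; exists (M *+ k.+1) => g gb.
  have [->|gm] := level g gb; first by rewrite pmulrn_lgt0.
  by move: gb mb; rewrite gm => ->.
apply/fsetP => g; rewrite !inE; apply/idP/orP => [/level [] ->|[] /eqP ->].
- by left.
- by right.
- exact: mem_block.
- exact: mb.
Qed.

Lemma min_opp_max : m = - M.
Proof.
have m_lt0 := min_lt0; set N := `|M - m|%N.
set a := M *+ N; set b := m *+ N.
(* [block a * block a] is supported on [{2a, a + b, 2b}], and [2a], [2b] lie in
   [block (2a)], which avoids [a + b]: so [a + b] is alone in its block. *)
have a_gt0 : 0 < a by rewrite pmulrn_lgt0 //; lia.
have b_lt0 : b < 0 by rewrite -oppr_gt0 -mulNrn pmulrn_lgt0 ?oppr_gt0 //; lia.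
have Pab : block a = [fset a; b] by rewrite block_level.
have P2 : block (a + a) = [fset a + a; b + b] by rewrite -!mulrnDr block_level ?leq_addr.
have off g : g \in block (a + a) -> g \notin block (a + b).
  move=> g2; apply: contraTN (mem_block (a + b)) => gab.
  rewrite -(block_mem gab) (block_mem g2) P2 !inE; lia.
have single g : g \in block (a + b) -> g = a + b.
  have abP : a + b \in sumset (block a) (block a).
    by rewrite Pab; apply: in_imfset2; rewrite !inE eqxx ?orbT.
  move=> gab; have /imfset2P [x] := sumset_block (D_block a) (D_block a) abP gab.
  rewrite Pab !inE => /orP [] /eqP -> [y]; rewrite !inE => /orP [] /eqP -> gE //.
  - by have := off _ (mem_block (a + a)); rewrite -gE gab.
  - by rewrite gE addrC.
  - have bb : b + b \in block (a + a) by rewrite P2 !inE eqxx orbT.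
    by have := off _ bb; rewrite -gE gab.
have ab0 : a + b = 0.
  case: (ltgtP (a + b) 0) => // ab_sgn; exfalso; apply: no_pos.
    by apply: (positive_blockN (x := a + b)) => g /single ->.
  by exists (a + b) => g /single ->.
have : (M + m) *+ N == 0 by rewrite mulrnDl ab0.
by rewrite mulrn_eq0; move: ab0 a_gt0 b_lt0; lia.
Qed.

Lemma primitive_eq_pm : C = [fset M; - M].
Proof.
have mM := min_opp_max; set N := `|M - m|%N.
have same_level y w k : (N <= k)%N -> w \in block y ->
    (w == M *+ k) || (w == - (M *+ k)) -> y = M *+ k \/ y = - (M *+ k).
  move=> le_k wy wk; have wk' : w \in block (M *+ k) by rewrite block_level // mM mulNrn !inE.
  have := mem_block y; rewrite -(block_mem wy) (block_mem wk') block_level // mM mulNrn !inE.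
  by case/orP => /eqP; [left|right].
have onC c : c \in C -> c = M \/ c = - M.
  move=> cC; have := lem cC; rewrite mM => c_ge.
  set X := M *+ N; have X_ge0 : 0 <= X by rewrite mulrn_wge0 // ltW.
  set x := M *+ N.+1; have xE : x = X + M by rewrite /x mulrSr.
  have x2E : M *+ N.+2 = X + M + M by rewrite !mulrSr.
  (* [c = (x + c) - x] lies in [block (x + c) * block x], hence so does [M]; this puts
     [block (x + c)] at the level of [M - x] or of [M + x]. *)
  have : M \in sumset (block (x + c)) (block x).
    apply: (sumset_block (D_block _) (D_block _) _ (_ : M \in block c)).
      apply/imfset2P; exists (x + c); first exact: mem_block.
      by exists (- x); [rewrite block_level // mM mulNrn !inE eqxx orbT | rewrite addrC addKr].
    by rewrite -(blockE DC cC).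
  case/imfset2P => w wW [y]; rewrite block_level // mM mulNrn !inE => /orP [] /eqP -> Mw.
  - by case: (same_level _ _ N (leqnn N) wW); move: Mw; rewrite -/X ?xE; lia.
  - by case: (same_level _ _ N.+2 (leqW (leqnSn N)) wW); move: Mw; rewrite x2E ?xE; lia.
apply/fsetP => g; apply/idP/idP => [/onC [] ->|]; rewrite !inE ?eqxx ?orbT //.
by case/orP => /eqP ->; rewrite -?mM.
Qed.

End NoPositiveBlock.

End SchurPartition.

Theorem lemma3p1 (F : fieldType) (charF0 : [pchar F] =i pred0)
  (D : {fset int} -> Prop) (HS : schur_partition F D)
  (C : {fset int}) (HC : D C) (hz : (1 : int) \in C) :
  C = [fset (1 : int)] \/ C = [fset (1 : int); (-1 : int)].
Proof.
have [M MC leM] := seq_max hz; have [m mC lem] := seq_min hz.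
have M_gt0 : 0 < M := lt_le_trans ltr01 (leM 1 hz).
have [pos|no_pos] := classic (positive_block HS).
  by left; apply: (positive_block_singleton charF0 pos HC hz ler01).
have CE := primitive_eq_pm charF0 HC MC mC leM lem M_gt0 no_pos.
have M1 : M = 1 by move: hz; rewrite CE !inE => /orP [] /eqP; lia.
by right; rewrite CE M1.
Qed.
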